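(* Consider Phase-1 training with learning rate $\alpha>0$ on a fixed batch of size $N$, fix $a_\star\in(0,1]$ and let $T_\star := \min\{t:|a_t|\ge a_\star\}$. Let $q_\star := c_0/\sqrt N>0$. Assume $\mathrm{sign}(a_0) = \mathrm{sign}(q_0)$, $|q_0|\ge q_\star$, and $\alpha a_\star\|\widehat M\|_2\le\frac12$. Then \[ \|w_{T_\star} - w_0\|_2 \le \frac{8\|\widehat M\|_2}{q_\star}a_\star(a_\star - |a_0|)_+ + 4\alpha\|\widehat M\|_2 a_\star . \]
   Context: $\widehat M := \frac1N\sum_{s=1}^N y^{(s)}x^{(s)}x^{(s)\top}$ for samples $x^{(s)}\in\{\pm1\}^d$, $y^{(s)} = x^{(s)}_1x^{(s)}_2$. Phase-1 updates: $a_{t+1} = \mathrm{clip}_{[-1,1]}(a_t + \frac\alpha2 q_t)$, $w_{t+1} = \frac{w_t+\alpha a_t\widehat Mw_t}{\|w_t+\alpha a_t\widehat Mw_t\|_2}$, $q_t := w_t^\top\widehat Mw_t$, with $w_0$ a unit vector. $c_0>0$ is a constant. $(z)_+ = \max\{z,0\}$, and $\|\widehat M\|_2$ is the operator norm. *)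

From HB Require Import structures.
From mathcomp Require Import all_boot all_order all_algebra.
From mathcomp Require Import boolp classical_sets reals.
Set Implicit Arguments. Unset Strict Implicit. Unset Printing Implicit Defensive.
Import Order.TTheory GRing.Theory Num.Theory.
Local Open Scope ring_scope.
Local Open Scope classical_set_scope.

Definition norm2 {R : realType} {n : nat} (v : 'cV[R]_n) : R :=
  Num.sqrt (\sum_(i < n) v i 0 ^+ 2).

Definition opnorm2 {R : realType} {n : nat} (M : 'M[R]_n) : R :=
  sup [set norm2 (M *m v) | v in [set v : 'cV[R]_n | norm2 v = 1]].

(* Empirical matrix  Mhat = 1/N sum_s y^(s) x^(s) x^(s)^T,
   with x^(s) in {+-1}^(d+2) and y^(s) = x^(s)_1 x^(s)_2 (first two coords). *)
Definition Mhat {R : realType} {N d : nat} (x : 'I_N -> 'cV[R]_d.+2) : 'M[R]_d.+2 :=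
  N%:R^-1 *: \sum_(s < N) ((x s ord0 0 * x s (lift ord0 ord0) 0) *: (x s *m (x s)^T)).

Definition clip1 {R : realType} (z : R) : R := Num.max (-1) (Num.min 1 z).

Definition quad {R : realType} {n : nat} (M : 'M[R]_n) (w : 'cV[R]_n) : R :=
  ((w^T *m M *m w) 0 0).

Definition wstep {R : realType} {n : nat} (alpha : R) (M : 'M[R]_n) (a : R) (w : 'cV[R]_n)
  : 'cV[R]_n :=
  let u := w + (alpha * a) *: (M *m w) in (norm2 u)^-1 *: u.

From HB Require Import structures.
From mathcomp Require Import all_boot all_order all_algebra.
From mathcomp Require Import boolp classical_sets reals.
From mathcomp Require Import ring lra.
Import Order.TTheory GRing.Theory Num.Theory.
Local Open Scope ring_scope.

(* Before T_star every |a_t| is below a_star, so each normalized power step moves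
   w by at most 2 alpha a_star ||M||.  Symmetry of M makes each step increase
   sign(a_0) q_t, hence sign(a_0) q_t >= q_star throughout, and a_t drifts away from
   0 by at least alpha q_star / 2 per step without clipping.  This bounds T_star by
   1 + 2 (a_star - |a_0|) / (alpha q_star), and the two bounds multiply out to the
   claim. *)

Section Dot.
Context {R : realDomainType} {n : nat}.
Implicit Types u v w : 'cV[R]_n.

Definition dot u v : R := (u^T *m v) 0 0.

Lemma dotE u v : dot u v = \sum_i u i 0 * v i 0.
Proof. by rewrite /dot !mxE; apply: eq_bigr => i _; rewrite mxE. Qed.

Lemma dotC u v : dot u v = dot v u.
Proof. by rewrite !dotE; apply: eq_bigr => i _; rewrite mulrC. Qed.

Lemma dotDl u v w : dot (u + v) w = dot u w + dot v w.
Proof. by rewrite /dot linearD /= mulmxDl mxE. Qed.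

Lemma dotZl (c : R) u v : dot (c *: u) v = c * dot u v.
Proof. by rewrite /dot linearZ /= -scalemxAl mxE. Qed.

Lemma dotBl u v w : dot (u - v) w = dot u w - dot v w.
Proof. by rewrite dotDl -scaleN1r dotZl mulN1r. Qed.

Lemma dotDr u v w : dot w (u + v) = dot w u + dot w v.
Proof. by rewrite dotC dotDl !(dotC w). Qed.

Lemma dotZr (c : R) u v : dot v (c *: u) = c * dot v u.
Proof. by rewrite dotC dotZl dotC. Qed.

Lemma dotBr u v w : dot w (u - v) = dot w u - dot w v.
Proof. by rewrite !(dotC w) dotBl. Qed.

Lemma dot0r u : dot u 0 = 0.
Proof. by rewrite /dot mulmx0 mxE. Qed.

Lemma dot_ge0 v : 0 <= dot v v.
Proof. by rewrite dotE sumr_ge0 // => i _; rewrite -expr2 sqr_ge0. Qed.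

Lemma dot_eq0 v : dot v v = 0 -> v = 0.
Proof.
rewrite dotE => /psumr_eq0P vi0; apply/matrixP => i j; rewrite (ord1 j) mxE.
by apply/eqP; rewrite -sqrf_eq0 expr2 vi0 // => k _; rewrite -expr2 sqr_ge0.
Qed.

Lemma cauchy_schwarz_sqr u v : dot u v ^+ 2 <= dot u u * dot v v.
Proof.
have [/dot_eq0 -> | v0] := eqVneq (dot v v) 0; first by rewrite !dot0r expr0n mulr0.
have vv_gt0 : 0 < dot v v by rewrite lt_def v0 dot_ge0.
have := dot_ge0 (dot v v *: u - dot u v *: v).
rewrite dotBl !dotBr !dotZl !dotZr (dotC v u).
have -> : dot v v * (dot v v * dot u u) - dot v v * (dot u v * dot u v)
    - (dot u v * (dot v v * dot u v) - dot u v * (dot u v * dot v v))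
    = dot v v * (dot u u * dot v v - dot u v ^+ 2) by ring.
by rewrite pmulr_rge0 // subr_ge0.
Qed.

End Dot.

Section Norm2.
Context {R : realType} {n : nat}.
Implicit Types u v : 'cV[R]_n.

Lemma norm2_dot v : norm2 v = Num.sqrt (dot v v).
Proof. by rewrite /norm2 dotE; congr Num.sqrt; apply: eq_bigr => i _; rewrite expr2. Qed.

Lemma norm2_ge0 v : 0 <= norm2 v.
Proof. by rewrite norm2_dot sqrtr_ge0. Qed.

Lemma norm2_sqr v : norm2 v ^+ 2 = dot v v.
Proof. by rewrite norm2_dot sqr_sqrtr // dot_ge0. Qed.

Lemma norm2_eq0 v : norm2 v = 0 -> v = 0.
Proof. by move=> v0; apply: dot_eq0; rewrite -norm2_sqr v0 expr0n. Qed.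

Lemma norm20 : norm2 (0 : 'cV[R]_n) = 0.
Proof. by rewrite norm2_dot dot0r sqrtr0. Qed.

Lemma cauchy_schwarz u v : `|dot u v| <= norm2 u * norm2 v.
Proof.
rewrite -ler_sqr ?nnegrE ?mulr_ge0 ?norm2_ge0 //.
by rewrite real_normK ?num_real // exprMn !norm2_sqr cauchy_schwarz_sqr.
Qed.

Lemma norm2Z (c : R) v : norm2 (c *: v) = `|c| * norm2 v.
Proof. by rewrite !norm2_dot dotZl dotZr mulrA -expr2 sqrtrM ?sqr_ge0 // sqrtr_sqr. Qed.

Lemma norm2N v : norm2 (- v) = norm2 v.
Proof. by rewrite -scaleN1r norm2Z normrN1 mul1r. Qed.

Lemma norm2D u v : norm2 (u + v) <= norm2 u + norm2 v.
Proof.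
rewrite -ler_sqr ?nnegrE ?addr_ge0 ?norm2_ge0 //.
rewrite norm2_sqr dotDl !dotDr (dotC v u) sqrrD !norm2_sqr.
have := ler_norm (dot u v); have := cauchy_schwarz u v; lra.
Qed.

End Norm2.

Section OperatorNorm.
Context {R : realType} {n : nat}.
Variable M : 'M[R]_n.

Lemma dot_mulmx_le v :
  dot (M *m v) (M *m v) <= (\sum_i dot (row i M)^T (row i M)^T) * dot v v.
Proof.
rewrite [X in X <= _]dotE mulr_suml; apply: ler_sum => i _.
have -> : (M *m v) i 0 = dot (row i M)^T v.
  by rewrite dotE mxE; apply: eq_bigr => j _; rewrite !mxE.
by rewrite -expr2 cauchy_schwarz_sqr.
Qed.

Lemma opnorm2_bound v : norm2 (M *m v) <= opnorm2 M * norm2 v.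
Proof.
have [-> | v0] := eqVneq v 0; first by rewrite mulmx0 norm20 mulr0.
have v_gt0 : 0 < norm2 v.
  by rewrite lt_def norm2_ge0 andbT; apply: contra_neq v0 => /norm2_eq0.
pose F := \sum_i dot (row i M)^T (row i M)^T.
have ub : has_ubound [set norm2 (M *m u) | u in [set u : 'cV[R]_n | norm2 u = 1]].
  exists (Num.sqrt F) => _ [u /= u1 <-]; rewrite norm2_dot ler_wsqrtr //.
  by have := dot_mulmx_le u; rewrite -(norm2_sqr u) u1 expr1n mulr1.
rewrite mulrC -ler_pdivrMl //.
apply: ub_le_sup ub _ _; exists ((norm2 v)^-1 *: v) => /=.
  by rewrite norm2Z ger0_norm ?invr_ge0 ?norm2_ge0 // mulVf ?gt_eqF.
by rewrite -scalemxAr norm2Z ger0_norm // invr_ge0 norm2_ge0.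
Qed.

End OperatorNorm.

Section WStep.
Context {R : realType} {n : nat}.
Context {M : 'M[R]_n} {L : R}.
Hypothesis M_sym : M^T = M.
Hypothesis M_le : forall v, norm2 (M *m v) <= L * norm2 v.

Lemma quad_dot w : quad M w = dot w (M *m w).
Proof. by rewrite /quad /dot mulmxA. Qed.

Lemma dot_mulmxC u v : dot u (M *m v) = dot (M *m u) v.
Proof. by rewrite /dot trmx_mul M_sym mulmxA. Qed.

Lemma quad_form_le v : `|dot v (M *m v)| <= L * dot v v.
Proof.
apply: le_trans (cauchy_schwarz _ _) _; rewrite -norm2_sqr expr2 mulrCA.
by rewrite ler_wpM2l ?norm2_ge0.
Qed.

Context {w : 'cV[R]_n} {alpha a : R}.
Hypothesis w_unit : norm2 w = 1.
Hypothesis step_small : `|alpha * a| * L <= 1 / 2.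

Let b := alpha * a.
Let u := w + b *: (M *m w).

Let wstepE : wstep alpha M a w = (norm2 u)^-1 *: u.
Proof. by []. Qed.

Let norm2_shift_le : norm2 (b *: (M *m w)) <= `|b| * L.
Proof. by rewrite norm2Z ler_wpM2l // -[L]mulr1 -w_unit M_le. Qed.

Let norm2_dir_near1 : `|norm2 u - 1| <= `|b| * L.
Proof.
rewrite ler_norml; have := norm2D w (b *: (M *m w)).
have := norm2D u (- (b *: (M *m w))); rewrite addrK norm2N -/u w_unit.
have := norm2_shift_le; lra.
Qed.

Let norm2_dir_gt0 : 0 < norm2 u.
Proof. by move: norm2_dir_near1 step_small; rewrite ler_norml -/b; lra. Qed.

Lemma norm2_wstep : norm2 (wstep alpha M a w) = 1.
Proof. by rewrite wstepE norm2Z ger0_norm ?invr_ge0 ?norm2_ge0 // mulVf ?gt_eqF. Qed.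

Lemma norm2_wstep_sub : norm2 (wstep alpha M a w - w) <= 2 * (`|alpha * a| * L).
Proof.
have -> : wstep alpha M a w - w = ((norm2 u)^-1 - 1) *: u + b *: (M *m w).
  by rewrite wstepE scalerBl scale1r /u opprD addrA subrK.
apply: le_trans (norm2D _ _) _.
have -> : norm2 (((norm2 u)^-1 - 1) *: u) = `|norm2 u - 1|.
  rewrite norm2Z -[X in _ * X]ger0_norm ?norm2_ge0 // -normrM mulrBl.
  by rewrite mulVf ?gt_eqF // mul1r distrC.
by have := norm2_dir_near1; have := norm2_shift_le; rewrite -/b; lra.
Qed.

(* Writing M w = q w + v with v orthogonal to w isolates the gain of the
   Rayleigh quotient along the step. *)
Lemma rayleigh_gap (q := quad M w) (v := M *m w - q *: w) :
  dot u (M *m u) - q * dot u u = b * (dot v v * (2 + b * q) + b * dot v (M *m v)).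
Proof.
rewrite /v /u /q quad_dot mulmxBr mulmxDr -!scalemxAr.
set z := M *m w.
have ww : dot w w = 1 by rewrite -norm2_sqr w_unit expr1n.
rewrite !(dotBl, dotBr, dotDl, dotDr, dotZl, dotZr) ww (dot_mulmxC w z) (dotC z w).
ring.
Qed.

Lemma wstep_quad_monotone : 0 <= alpha * a * (quad M (wstep alpha M a w) - quad M w).
Proof.
set q := quad M w; set v := M *m w - q *: w.
have uu : (norm2 u)^-1 ^+ 2 * dot u u = 1.
  by rewrite -norm2_sqr -exprMn mulVf ?gt_eqF // expr1n.
have -> : quad M (wstep alpha M a w) - q
    = (norm2 u)^-1 ^+ 2 * (dot u (M *m u) - q * dot u u).
  rewrite wstepE quad_dot -scalemxAr dotZl dotZr mulrA -expr2.
  by rewrite mulrBr mulrCA uu mulr1.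
rewrite rayleigh_gap -/q -/v mulrCA mulr_ge0 ?sqr_ge0 // mulrA -expr2 mulr_ge0 ?sqr_ge0 //.
have q_le : `|b * q| <= 1 / 2.
  rewrite normrM; apply: le_trans step_small; rewrite ler_wpM2l //.
  by have := quad_form_le w; rewrite -quad_dot -norm2_sqr w_unit expr1n mulr1.
have f_le : `|b * dot v (M *m v)| <= dot v v / 2.
  rewrite normrM; apply: le_trans (ler_wpM2l (normr_ge0 b) (quad_form_le v)) _.
  by rewrite mulrA; have := step_small; have := dot_ge0 v; rewrite -/b; nra.
move: q_le f_le; rewrite !ler_norml => /andP[? ?] /andP[? ?]; have := dot_ge0 v; nra.
Qed.

End WStep.

Lemma clip1_id {R : realType} (y : R) : `|clip1 y| < 1 -> clip1 y = y.
Proof.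
rewrite /clip1 minEle maxEle.
case: (lerP 1 y) => y1 /=.
  by case: (lerP (-1) 1) => /= _ /ltr_normlP []; lra.
by case: (lerP (-1) y) => /= _ /ltr_normlP []; lra.
Qed.

Lemma Mhat_sym {R : realType} {N d : nat} (x : 'I_N -> 'cV[R]_d.+2) : (Mhat x)^T = Mhat x.
Proof.
rewrite /Mhat linearZ linear_sum; congr (_ *: _); apply: eq_bigr => s _.
by rewrite linearZ /= trmx_mul trmxK.
Qed.

Section PhaseOne.
Context {R : realType} {n : nat}.
Context {M : 'M[R]_n} {L alpha astar qs : R} {a : nat -> R} {w : nat -> 'cV[R]_n}.
Context {T : nat}.
Hypothesis M_sym : M^T = M.
Hypothesis M_le : forall v, norm2 (M *m v) <= L * norm2 v.
Hypothesis alpha_gt0 : 0 < alpha.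
Hypothesis astar_ge0 : 0 <= astar.
Hypothesis astar_le1 : astar <= 1.
Hypothesis qs_gt0 : 0 < qs.
Hypothesis w0_unit : norm2 (w 0%N) = 1.
Hypothesis a_step : forall t, a t.+1 = clip1 (a t + alpha / 2 * quad M (w t)).
Hypothesis w_step : forall t, w t.+1 = wstep alpha M (a t) (w t).
Hypothesis a_below : forall t, (t < T)%N -> `|a t| < astar.
Hypothesis q0_aligned : qs <= Num.sg (a 0%N) * quad M (w 0%N).
Hypothesis lr_small : alpha * astar * L <= 1 / 2.

Let s := Num.sg (a 0%N).

Let a0_neq0 : a 0%N != 0.
Proof. by apply: contraTneq q0_aligned => a00; rewrite -/s /s a00 sgr0 mul0r -ltNge. Qed.

Let s_sqr : s * s = 1.
Proof. by rewrite -sgrM -expr2 gtr0_sg // lt_def sqrf_eq0 a0_neq0 sqr_ge0. Qed.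

Let L_ge0 : 0 <= L.
Proof. by apply: le_trans (norm2_ge0 (M *m w 0%N)) _; rewrite -[L]mulr1 -w0_unit. Qed.

Let step_small t : (t < T)%N -> `|alpha * a t| * L <= 1 / 2.
Proof.
move=> tT; apply: le_trans lr_small; rewrite normrM gtr0_norm // ler_wpM2r //.
by rewrite ler_pM2l // ltW // a_below.
Qed.

Lemma phase1_invariant t : (t < T)%N ->
  [/\ norm2 (w t) = 1, qs <= s * quad M (w t)
    & `|a 0%N| + alpha / 2 * qs * t%:R <= s * a t].
Proof.
elim: t => [|t IH] tT.
  by split=> //; rewrite mulr0 addr0 /s -normrEsg.
have [wt_unit qt_ge at_ge] := IH (ltnW tT).
have sat_gt0 : 0 < s * a t.
  have : 0 <= alpha / 2 * qs * t%:R.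
    by rewrite mulr_ge0 ?ler0n // mulr_ge0 ?divr_ge0 ?ltW.
  by move: a0_neq0 at_ge; rewrite -normr_gt0; lra.
have small := step_small t (ltnW tT).
split.
- by rewrite w_step (norm2_wstep M_le).
- suff : s * quad M (w t) <= s * quad M (w t.+1) by lra.
  rewrite -subr_ge0 -mulrBr -(pmulr_rge0 _ (mulr_gt0 alpha_gt0 sat_gt0)).
  have -> : alpha * (s * a t) * (s * (quad M (w t.+1) - quad M (w t)))
      = s * s * (alpha * a t * (quad M (w t.+1) - quad M (w t))) by ring.
  by rewrite s_sqr mul1r w_step (wstep_quad_monotone M_sym M_le).
- have at1E : a t.+1 = a t + alpha / 2 * quad M (w t).
    rewrite a_step clip1_id // -a_step.
    by apply: lt_le_trans astar_le1; exact: a_below.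
  rewrite at1E mulrDr -[t.+1%:R]natr1 mulrDr mulr1 (mulrCA s).
  by have := ler_wpM2l (divr_ge0 (ltW alpha_gt0) (ler0n _ 2)) qt_ge; lra.
Qed.

Lemma phase1_drift t : (t <= T)%N ->
  norm2 (w t - w 0%N) <= 2 * alpha * astar * L * t%:R.
Proof.
elim: t => [|t IH] tT; first by rewrite subrr norm20 mulr0.
have [wt_unit _ _] := phase1_invariant t tT.
have := norm2_wstep_sub M_le wt_unit (step_small t tT); rewrite -w_step => step_le.
have : `|alpha * a t| * L <= alpha * astar * L.
  by rewrite normrM gtr0_norm // ler_wpM2r // ler_pM2l // ltW // a_below.
have -> : w t.+1 - w 0%N = (w t.+1 - w t) + (w t - w 0%N) by rewrite addrA subrK.
have := norm2D (w t.+1 - w t) (w t - w 0%N).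
by have := IH (ltnW tT); rewrite -[t.+1%:R]natr1; lra.
Qed.

Lemma phase1_displacement :
  norm2 (w T - w 0%N) <=
    8 * L / qs * astar * Num.max 0 (astar - `|a 0%N|) + 4 * alpha * L * astar.
Proof.
set D := Num.max 0 (astar - `|a 0%N|).
have D_ge0 : 0 <= D by rewrite le_max lexx.
have D_ge : astar - `|a 0%N| <= D by rewrite le_max lexx orbT.
have aL_ge0 : 0 <= astar * L by rewrite mulr_ge0.
have -> : 8 * L / qs * astar * D = 4 * (astar * L) * (2 * D / qs).
  by rewrite mulrA; field; rewrite gt_eqF.
apply: le_trans (phase1_drift T (leqnn T)) _.
have aLD_ge0 : 0 <= astar * L * (2 * D / qs).
  by rewrite mulr_ge0 // divr_ge0 ?(ltW qs_gt0) // mulr_ge0.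
case: T a_below phase1_invariant => [|k] below inv.
  by rewrite mulr0; have := mulr_ge0 (ltW alpha_gt0) aL_ge0; lra.
have [_ _ ak_ge] := inv k (ltnSn k).
have time_le : alpha * k%:R <= 2 * D / qs.
  rewrite ler_pdivlMr // -[_ * qs]mulrA (mulrC _ qs) mulrA.
  have := ler_norm (s * a k); rewrite normrM /s normr_sg a0_neq0 mul1r -/s.
  by have := below k (ltnSn k); lra.
have := ler_wpM2l aL_ge0 time_le; rewrite -[k.+1%:R]natr1.
by have := mulr_ge0 (ltW alpha_gt0) aL_ge0; lra.
Qed.

End PhaseOne.

Theorem lemma11 (R : realType) (N d : nat) (x : 'I_N -> 'cV[R]_d.+2)
  (c0 alpha astar : R) (a : nat -> R) (w : nat -> 'cV[R]_d.+2) (Tstar : nat) :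
  (0 < N)%N ->
  (forall s i, x s i 0 = 1 \/ x s i 0 = -1) ->
  0 < c0 -> 0 < alpha -> 0 < astar -> astar <= 1 ->
  norm2 (w 0%N) = 1 ->
  (forall t, a t.+1 = clip1 (a t + alpha / 2 * quad (Mhat x) (w t))) ->
  (forall t, w t.+1 = wstep alpha (Mhat x) (a t) (w t)) ->
  (* Tstar = min { t | |a_t| >= astar } *)
  astar <= `|a Tstar| -> (forall t, (t < Tstar)%N -> `|a t| < astar) ->
  Num.sg (a 0%N) = Num.sg (quad (Mhat x) (w 0%N)) ->
  c0 / Num.sqrt (N%:R) <= `|quad (Mhat x) (w 0%N)| ->
  alpha * astar * opnorm2 (Mhat x) <= 1 / 2 ->
  norm2 (w Tstar - w 0%N) <=
    8 * opnorm2 (Mhat x) / (c0 / Num.sqrt (N%:R)) * astar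
      * Num.max 0 (astar - `|a 0%N|)
    + 4 * alpha * opnorm2 (Mhat x) * astar.
Proof.
(* Neither the sign entries of the samples nor the minimality of Tstar is needed:
   only |a_t| < astar before Tstar enters the argument. *)
move=> N_gt0 _ c0_gt0 alpha_gt0 astar_gt0 astar_le1 w0_unit a_step w_step _ a_below
  sg_aligned q0_ge lr_small.
have qs_gt0 : 0 < c0 / Num.sqrt N%:R by rewrite divr_gt0 // sqrtr_gt0 ltr0n.
apply: phase1_displacement (Mhat_sym x) (opnorm2_bound _) alpha_gt0 (ltW astar_gt0)
  astar_le1 qs_gt0 w0_unit a_step w_step a_below _ lr_small.
by rewrite sg_aligned -normrEsg.
Qed.
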